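(* Let $0<c<1$ and let $m\in\mathcal P$ be such that $\mathcal F_c(m)=m$ and $m(x,y)\ge|obs(x)-obs(y)|$ for all $x,y\in E$. Then $m\ge\overline\delta^c$ pointwise.
   Context: Standing setting (diffusion): $E$ is a locally compact Hausdorff space with a countable base, equipped with its Borel $\sigma$-algebra and a fixed $1$-bounded metric $\Delta$ generating its topology (so $E$ is Polish). $(P_t)_{t\ge0}$ is a family of Markov kernels on $E$ obtained from a Feller–Dynkin semigroup $(\hat P_t)_{t\ge0}$ on $C_0(E)$ via $\hat P_t f(x)=\int f(y)\,P_t(x,\mathrm dy)$; the process is honest, i.e. $P_t(x,E)=1$ for all $t\ge0,x\in E$, and $P_0(x)=\delta_x$. We write $P_t(x)$ for the probability measure $P_t(x,\cdot)$. $\Omega$ is the space of continuous trajectories $\omega:[0,\infty)\to E$, with the topology of the uniform metric $U(\Delta)(\omega,\omega')=\sup_{t\ge0}\Delta(\omega(t),\omega'(t))$, assumed Polish; for each $x\in E$, $\mathbb P^x$ is the Borel probability measure on $\Omega$ of the canonical process started at $x$ (so $\omega(0)=x$ a.s. and the finite-dimensional distributions are given by the kernels $P_t$; in particular the law of $\omega(t)$ under $\mathbb P^x$ is $P_t(x)$). The map $x\mapsto\mathbb P^x$ is weakly continuous (hence so is $x\mapsto P_t(x)$ for each $t$). A continuous function $obs:E\to[0,1]$ is fixed. Transport: for Borel probability measures $\mu,\nu$ on a Polish space $X$, $\Gamma(\mu,\nu)$ is the set of couplings; for lower semicontinuous $c:X\times X\to[0,1]$, $W(c)(\mu,\nu)=\min_{\gamma\in\Gamma(\mu,\nu)}\int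 c\,\mathrm d\gamma$. Lattices: $\mathcal M$ is the set of $1$-bounded pseudometrics on $E$ ordered pointwise; $\mathcal P\subseteq\mathcal M$ consists of those that are lower semicontinuous as functions $E\times E\to[0,1]$ (for the topology of $\Delta$); $\mathcal C\subseteq\mathcal P$ consists of those that are continuous. Functional: for $0<c\le1$ and $m\in\mathcal P$, $\mathcal F_c(m)(x,y)=\sup_{t\ge0} c^t\,W(m)(P_t(x),P_t(y))$. Sequence: for $0<c<1$, $\delta^c_0(x,y)=|obs(x)-obs(y)|$ and $\delta^c_{n+1}=\mathcal F_c(\delta^c_n)$ (each $\delta^c_n$ lies in $\mathcal C$, since $\mathcal F_c$ maps $\mathcal C$ into $\mathcal C$ for $c<1$, so the recursion is well defined); the sequence is pointwise non-decreasing and $\overline\delta^c=\sup_n\delta^c_n$. *)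

From HB Require Import structures.
From mathcomp Require Import all_boot all_order all_algebra.
From mathcomp Require Import all_classical all_reals all_analysis.
From mathcomp Require Import measurable_realfun lebesgue_integral.
Set Implicit Arguments. Unset Strict Implicit. Unset Printing Implicit Defensive.
Import Order.TTheory GRing.Theory Num.Theory.
Import numFieldNormedType.Exports.
Local Open Scope classical_set_scope.
Local Open Scope ring_scope.

Section Defs.
Context {R : realType} {E : ptopologicalType}.

Definition Borel := g_sigma_algebraType (@open E).

Definition vanish_at_infinity (f : E -> R) :=
  forall e : R, 0 < e -> exists2 K : set E, compact K &
    forall x, ~ K x -> `|f x| < e.
Definition C0 (f : E -> R) := continuous f /\ vanish_at_infinity f.

Definition integ (mu : probability Borel R) (f : E -> R) : R :=
  fine (\int[mu]_y (f y)%:E)%E.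

(* Standing assumptions on the Markov kernels (P_t): honest Markov kernels,
   P_0(x) = delta_x, Chapman-Kolmogorov, Feller-Dynkin on C_0(E),
   weak continuity of x |-> P_t(x). *)
Definition feller_markov (P : R -> E -> probability Borel R) :=
  [/\ (forall t (A : set Borel), 0 <= t -> measurable A ->
         measurable_fun [set: Borel] (fun x : Borel => P t x A)),
      (forall x (A : set Borel), measurable A -> P 0 x A = \d_(x : Borel) A),
      (forall s t x (A : set Borel), 0 <= s -> 0 <= t -> measurable A ->
         P (s + t) x A = (\int[P s x]_y P t y A)%E) &
    [/\ (forall t f, 0 <= t -> C0 f -> C0 (fun x => integ (P t x) f)),
      (forall f, C0 f -> forall e : R, 0 < e ->
         exists2 d : R, 0 < d & forall t x, 0 <= t -> t < d ->
           `|integ (P t x) f - f x| < e) &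
      (forall t f, 0 <= t -> continuous f ->
         (exists M : R, forall x, `|f x| <= M) ->
         continuous (fun x => integ (P t x) f))]].

Definition coupling (mu nu : probability Borel R)
  (g : probability (Borel * Borel)%type R) :=
  (forall A : set Borel, measurable A -> g (fst @^-1` A) = mu A) /\
  (forall A : set Borel, measurable A -> g (snd @^-1` A) = nu A).

Definition W (cost : E -> E -> R) (mu nu : probability Borel R) : R :=
  fine (ereal_inf [set v | exists g, coupling mu nu g /\
          v = (\int[g]_p (cost p.1 p.2)%:E)%E]).

Definition Fc (P : R -> E -> probability Borel R) (c : R) (m : E -> E -> R)
  : E -> E -> R :=
  fun x y => fine (ereal_sup [set v | exists t : R, 0 <= t /\
          v = ((c `^ t) * W m (P t x) (P t y))%:E]).

(* 1-bounded pseudometrics, and the lower semicontinuous ones (the lattice P) *)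
Definition pseudometric1 (m : E -> E -> R) :=
  [/\ forall x y, 0 <= m x y <= 1,
      forall x, m x x = 0,
      forall x y, m x y = m y x &
      forall x y z, m x z <= m x y + m y z].
Definition lsc_pseudometric (m : E -> E -> R) :=
  pseudometric1 m /\
  lower_semicontinuous (fun p : E * E => (m p.1 p.2)%:E).

Fixpoint delta (P : R -> E -> probability Borel R) (obs : E -> R) (c : R)
  (n : nat) : E -> E -> R :=
  match n with
  | 0 => fun x y => `|obs x - obs y|
  | n'.+1 => Fc P c (delta P obs c n')
  end.
Definition delta_bar (P : R -> E -> probability Borel R) (obs : E -> R)
  (c : R) : E -> E -> R :=
  fun x y => fine (ereal_sup (range (fun n => (delta P obs c n x y)%:E))).

End Defs.

From HB Require Import structures.
From mathcomp Require Import all_boot all_order all_algebra.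
From mathcomp Require Import all_classical all_reals all_analysis.
From mathcomp Require Import measurable_realfun lebesgue_integral.
From mathcomp Require Import lra.
Import Order.TTheory GRing.Theory Num.Theory.
Import numFieldNormedType.Exports.
Local Open Scope classical_set_scope.
Local Open Scope ring_scope.

(** A pseudometric in the lattice is bounded by 1, so [W m] and [Fc P c m]
    take values in [[0, 1]], and both are monotone in [m]: a coupling is
    cheaper for the smaller cost, and [c ^ t] is nonnegative.  Starting from
    [delta 0 <= m] and applying the monotone map [Fc P c], which fixes [m],
    induction gives [delta n <= m] for every [n], hence [delta_bar <= m]. *)

Section IntegralBounds.
Local Open Scope ereal_scope.
Context {R : realType} {d : measure_display} {T : measurableType d}.

(* No measurability is assumed (a lower semicontinuous cost on [E * E] need
   not be measurable for the product sigma-algebra), so monotonicity is read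
   off the definition of the integral as a supremum over simple functions. *)
Lemma ge0_le_integralT (mu : {measure set T -> \bar R}) (f g : T -> \bar R) :
  (forall x, 0 <= f x) -> (forall x, f x <= g x) ->
  \int[mu]_x f x <= \int[mu]_x g x.
Proof.
move=> f0 fg; have g0 x : 0 <= g x := le_trans (f0 x) (fg x).
rewrite !ge0_integralTE //; apply: ereal_sup_le => _ [h /= hf <-].
by exists h => //= x; exact: le_trans (hf x) (fg x).
Qed.

Lemma integral_in01 (mu : probability T R) (f : T -> \bar R) :
  (forall x, 0 <= f x <= 1) -> 0 <= \int[mu]_x f x <= 1.
Proof.
move=> f01; apply/andP; split.
  by apply: integral_ge0 => x _; case/andP: (f01 x).
apply: le_trans (@ge0_le_integralT mu f (cst 1) _ _) _.
- by move=> x; case/andP: (f01 x).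
- by move=> x; case/andP: (f01 x).
by rewrite integral_cst // mul1e; exact: probability_le1.
Qed.

End IntegralBounds.

Section UnitIntervalBounds.
Local Open Scope ereal_scope.
Context {R : realType}.

Definition within01 (S : set (\bar R)) := forall v, S v -> 0 <= v <= 1.

Lemma fin_num_in01 {x : \bar R} : 0 <= x <= 1 -> x \is a fin_num.
Proof. by case/andP=> x0 x1; rewrite ge0_fin_numE // (le_lt_trans x1) ?ltry. Qed.

Lemma fine_in01 {x : \bar R} : 0 <= x <= 1 -> (0 <= fine x <= 1)%R.
Proof.
move=> x01; have /fineK xE := fin_num_in01 x01.
by rewrite -!lee_fin xE.
Qed.

Lemma ereal_sup_in01 {S : set (\bar R)} :
  within01 S -> S !=set0 -> 0 <= ereal_sup S <= 1.
Proof.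
move=> S01 [v Sv]; apply/andP; split; last first.
  by apply: ge_ereal_sup => u /S01 /andP[].
by apply: le_ereal_sup_tmp; exists v => //; case/andP: (S01 v Sv).
Qed.

Lemma ereal_inf_in01 {S : set (\bar R)} :
  within01 S -> S !=set0 -> 0 <= ereal_inf S <= 1.
Proof.
move=> S01 [v Sv]; apply/andP; split.
  by apply: le_ereal_inf_tmp => u /S01 /andP[].
by apply: le_trans (ereal_inf_lbound Sv) _; case/andP: (S01 v Sv).
Qed.

Lemma le_fine_ereal_sup (S1 S2 : set (\bar R)) :
  within01 S1 -> within01 S2 -> S1 !=set0 ->
  (forall u, S1 u -> exists2 v, S2 v & u <= v) ->
  (fine (ereal_sup S1) <= fine (ereal_sup S2))%R.
Proof.
move=> S1_01 S2_01 S1_0 S12.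
have S2_0 : S2 !=set0 by have [u /S12[v S2v _]] := S1_0; exists v.
apply: fine_le; [exact: fin_num_in01 (ereal_sup_in01 S1_01 S1_0)|
  exact: fin_num_in01 (ereal_sup_in01 S2_01 S2_0)|].
by apply: ge_ereal_sup => v /S12 [w S2w vw]; apply: le_ereal_sup_tmp; exists w.
Qed.

Lemma le_fine_ereal_inf (S1 S2 : set (\bar R)) :
  within01 S1 -> within01 S2 -> S2 !=set0 ->
  (forall v, S2 v -> exists2 u, S1 u & u <= v) ->
  (fine (ereal_inf S1) <= fine (ereal_inf S2))%R.
Proof.
move=> S1_01 S2_01 S2_0 S21.
have S1_0 : S1 !=set0 by have [v /S21[u S1u _]] := S2_0; exists u.
apply: fine_le; [exact: fin_num_in01 (ereal_inf_in01 S1_01 S1_0)|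
  exact: fin_num_in01 (ereal_inf_in01 S2_01 S2_0)|].
apply: le_ereal_inf_tmp => u /S21 [w S1w wu].
exact: le_trans (ereal_inf_lbound S1w) wu.
Qed.

End UnitIntervalBounds.

Section TransportBounds.
Context {R : realType} {E : ptopologicalType}.
Implicit Types (m : E -> E -> R) (mu nu : probability (@Borel E) R).

Definition bounded01 m := forall x y, 0 <= m x y <= 1.

Lemma transport_cost_in01 m (g : probability (@Borel E * @Borel E)%type R) :
  bounded01 m -> (0 <= \int[g]_p (m p.1 p.2)%:E <= 1)%E.
Proof. by move=> m01; apply: integral_in01 => p; rewrite !lee_fin; exact: m01. Qed.

(* Without any coupling the infimum is [+oo], and [fine] sends it to [0]. *)
Lemma W_in01 {m} mu nu : bounded01 m -> 0 <= W m mu nu <= 1.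
Proof.
move=> m01; rewrite /W; set S := [set v | _].
have [[v Sv]|noS] := pselect (S !=set0).
  apply/fine_in01/ereal_inf_in01; last by exists v.
  by move=> _ [g [_ ->]]; exact: transport_cost_in01.
have -> : S = set0 by apply/seteqP; split=> // u Su; apply: noS; exists u.
by rewrite ereal_inf0 /= lexx ler01.
Qed.

Lemma le_W m1 m2 mu nu : bounded01 m1 -> bounded01 m2 ->
  (forall x y, m1 x y <= m2 x y) -> W m1 mu nu <= W m2 mu nu.
Proof.
move=> m1_01 m2_01 m12; rewrite /W.
have [[g cg]|nocoupling] := pselect (exists g, coupling mu nu g); last first.
  have costs0 m : [set v | exists g, coupling mu nu g /\
      v = (\int[g]_p (m p.1 p.2)%:E)%E] = set0.
    by apply/seteqP; split=> // v [g [cg _]]; apply: nocoupling; exists g.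
  by rewrite !costs0.
apply: le_fine_ereal_inf.
- by move=> _ [h [_ ->]]; exact: transport_cost_in01.
- by move=> _ [h [_ ->]]; exact: transport_cost_in01.
- by exists (\int[g]_p (m2 p.1 p.2)%:E)%E, g.
move=> _ [h [ch ->]]; exists (\int[h]_p (m1 p.1 p.2)%:E)%E; first by exists h.
apply: ge0_le_integralT => p; rewrite lee_fin //.
by case/andP: (m1_01 p.1 p.2).
Qed.

Variables (P : R -> E -> probability (@Borel E) R) (c : R).
Hypothesis c01 : 0 < c <= 1.

Lemma discounted_W_in01 m t mu nu : bounded01 m -> 0 <= t ->
  0 <= c `^ t * W m mu nu <= 1.
Proof.
move=> m01 t0; have /andP[W0 W1] := W_in01 mu nu m01.
have ct1 : c `^ t <= 1 by rewrite -(powRr0 c) ger_powR.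
by rewrite mulr_ge0 ?powR_ge0 //= -[1]mul1r ler_pM ?powR_ge0.
Qed.

Lemma Fc_bounded01 m : bounded01 m -> bounded01 (Fc P c m).
Proof.
move=> m01 x y; apply/fine_in01/ereal_sup_in01.
  by move=> _ [t [t0 ->]]; rewrite !lee_fin; exact: discounted_W_in01.
by exists (c `^ 0 * W m (P 0 x) (P 0 y))%:E, 0.
Qed.

Lemma le_Fc m1 m2 : bounded01 m1 -> bounded01 m2 ->
  (forall x y, m1 x y <= m2 x y) -> forall x y, Fc P c m1 x y <= Fc P c m2 x y.
Proof.
move=> m1_01 m2_01 m12 x y; apply: le_fine_ereal_sup.
- by move=> _ [t [t0 ->]]; rewrite !lee_fin; exact: discounted_W_in01.
- by move=> _ [t [t0 ->]]; rewrite !lee_fin; exact: discounted_W_in01.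
- by exists (c `^ 0 * W m1 (P 0 x) (P 0 y))%:E, 0.
move=> _ [t [t0 ->]]; exists (c `^ t * W m2 (P t x) (P t y))%:E; first by exists t.
by rewrite lee_fin ler_wpM2l ?powR_ge0 // le_W.
Qed.

Variable obs : E -> R.
Hypothesis obs01 : forall x, 0 <= obs x <= 1.

Lemma delta_bounded01 n : bounded01 (delta P obs c n).
Proof.
elim: n => [|n IHn] x y /=; last exact: Fc_bounded01.
have /andP[? ?] := obs01 x; have /andP[? ?] := obs01 y.
by rewrite normr_ge0 ler_norml; apply/andP; split; lra.
Qed.

Lemma delta_le_fixpoint m : bounded01 m -> Fc P c m = m ->
  (forall x y, `|obs x - obs y| <= m x y) ->
  forall n x y, delta P obs c n x y <= m x y.
Proof.
move=> m01 mfix mobs; elim=> [//|n IHn] x y /=.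
by rewrite -mfix; apply: le_Fc => //; exact: delta_bounded01.
Qed.

Lemma delta_bar_le m : bounded01 m ->
  (forall n x y, delta P obs c n x y <= m x y) ->
  forall x y, delta_bar P obs c x y <= m x y.
Proof.
move=> m01 dm x y.
have -> : m x y = fine (ereal_sup [set (m x y)%:E]) by rewrite ereal_sup1.
apply: le_fine_ereal_sup.
- by move=> _ [n _ <-]; rewrite !lee_fin; exact: delta_bounded01.
- by move=> _ ->; rewrite !lee_fin; exact: m01.
- by exists (delta P obs c 0 x y)%:E, 0%N.
by move=> _ [n _ <-]; exists (m x y)%:E; rewrite // lee_fin dm.
Qed.

End TransportBounds.

Theorem mainTheorem5 (R : realType) (E : ptopologicalType)
  (hE : hausdorff_space E) (lcE : locally_compact [set: E])
  (scE : @second_countable E)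
  (P : R -> E -> probability (@Borel E) R) (hP : feller_markov P)
  (obs : E -> R) (obs_cont : continuous obs)
  (obs01 : forall x, 0 <= obs x <= 1)
  (c : R) (c0 : 0 < c) (c1 : c < 1)
  (m : E -> E -> R) (mP : lsc_pseudometric m)
  (mfix : Fc P c m = m)
  (mobs : forall x y, `|obs x - obs y| <= m x y) :
  forall x y, delta_bar P obs c x y <= m x y.
Proof.
have c01 : 0 < c <= 1 by rewrite c0 ltW.
have m01 : bounded01 m by case: mP => -[].
apply: delta_bar_le => //.
exact: delta_le_fixpoint.
Qed.
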